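(* Let $\delta$ satisfy the Kalmanson conditions with respect to $\pi=(x_1,\dots,x_n)$, let $C_1,\dots,C_m$ be a partition of $X$ into consecutive intervals of $\pi$ in this order, and let $\mu$ be a block weighting. If $1\le i<j\le m$ with $i<j-3$, then there exists $k\in\{1,\dots,m\}$ (indices read cyclically, $C_{m+1}=C_1$) such that \[Q_\delta(C_i,C_j)-Q_\delta(C_k,C_{k+1})\ge0.\]
   Context: $X=\{1,\dots,n\}$. A dissimilarity map is $\delta:X\times X\to\mathbb{R}$ with $\delta(i,j)=\delta(j,i)\ge0$, $\delta(i,i)=0$. A circular ordering is a listing $\pi=(x_1,\dots,x_n)$ of $X$ regarded cyclically. $\delta$ satisfies the Kalmanson conditions with respect to $\pi$ if for all $1\le i<j<k<l\le n$: $\delta(x_i,x_j)+\delta(x_k,x_l)\le\delta(x_i,x_k)+\delta(x_j,x_l)$ and $\delta(x_i,x_l)+\delta(x_j,x_k)\le\delta(x_i,x_k)+\delta(x_j,x_l)$. The partition into consecutive intervals means $C_1=\{x_1,\dots,x_{a_1}\}$, $C_2=\{x_{a_1+1},\dots,x_{a_2}\},\dots,C_m=\{x_{a_{m-1}+1},\dots,x_n\}$. A block weighting is $\mu:X\to\mathbb{R}_{\ge0}$ with $\sum_{x\in C_r}\mu(x)=1$ for every $r$. Set $\delta(C_r,C_s)=\sum_{x\in C_r,y\in C_s}\mu(x)\mu(y)\delta(x,y)$ and $Q_\delta(C_r,C_s)=(m-2)\delta(C_r,C_s)-\sum_{t\ne r}\delta(C_r,C_t)-\sum_{t\ne s}\delta(C_s,C_t)$.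 *)

From mathcomp Require Import all_boot all_order all_algebra all_fingroup.
Set Implicit Arguments. Unset Strict Implicit. Unset Printing Implicit Defensive.
Import Order.TTheory GRing.Theory Num.Theory.
Local Open Scope ring_scope.

(* X = {1,...,n} is represented by 'I_n (0-indexed).
   A circular ordering pi = (x_1,...,x_n) is a permutation pi : {perm 'I_n};
   x_{p+1} = pi p for the position p : 'I_n. *)

Definition dissimilarity (R : realFieldType) (n : nat) (d : 'I_n -> 'I_n -> R) :=
  (forall x y, d x y = d y x) /\ (forall x y, 0 <= d x y) /\ (forall x, d x x = 0).

Definition kalmanson (R : realFieldType) (n : nat) (d : 'I_n -> 'I_n -> R)
  (pi : {perm 'I_n}) :=
  forall i j k l : 'I_n, (i < j)%N -> (j < k)%N -> (k < l)%N ->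
    d (pi i) (pi j) + d (pi k) (pi l) <= d (pi i) (pi k) + d (pi j) (pi l) /\
    d (pi i) (pi l) + d (pi j) (pi k) <= d (pi i) (pi k) + d (pi j) (pi l).

(* A partition into consecutive intervals C_1,...,C_m of pi (in this order) is
   given by a nondecreasing block map b : positions -> 'I_m (block r is the
   0-indexed version of C_{r+1}). Nonemptiness of the blocks follows from the
   block-weighting condition. *)
Definition consecutive_blocks (n m : nat) (b : 'I_n -> 'I_m) :=
  forall p q : 'I_n, (p <= q)%N -> (b p <= b q)%N.

Definition block (n m : nat) (pi : {perm 'I_n}) (b : 'I_n -> 'I_m) (r : nat)
  : {set 'I_n} := [set pi p | p in [set p : 'I_n | (b p == r :> nat)]].

Definition block_weighting (R : realFieldType) (n m : nat) (pi : {perm 'I_n})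
  (b : 'I_n -> 'I_m) (mu : 'I_n -> R) :=
  (forall x, 0 <= mu x) /\
  (forall r : 'I_m, \sum_(x in block pi b r) mu x = 1).

Definition dblock (R : realFieldType) (n m : nat) (d : 'I_n -> 'I_n -> R)
  (pi : {perm 'I_n}) (b : 'I_n -> 'I_m) (mu : 'I_n -> R) (r s : nat) : R :=
  \sum_(x in block pi b r) \sum_(y in block pi b s) mu x * mu y * d x y.

Definition Qd (R : realFieldType) (n m : nat) (d : 'I_n -> 'I_n -> R)
  (pi : {perm 'I_n}) (b : 'I_n -> 'I_m) (mu : 'I_n -> R) (r s : nat) : R :=
  (m%:R - 2) * dblock d pi b mu r s
  - \sum_(t < m | (t : nat) != r) dblock d pi b mu r t
  - \sum_(t < m | (t : nat) != s) dblock d pi b mu s t.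

From mathcomp Require Import all_boot all_order all_algebra all_fingroup.
From mathcomp Require Import ring lra zify.
Set Implicit Arguments. Unset Strict Implicit. Unset Printing Implicit Defensive.
Import Order.TTheory GRing.Theory Num.Theory.
Local Open Scope ring_scope.

(* Averaging the point Kalmanson inequalities with the product weights mu x mu y mu z mu w
   shows that the block matrix Z(r,s) = delta(C_r,C_s) (with zero diagonal) is again
   Kalmanson for the order 0 < 1 < ... < m-1, and Q_delta only depends on Z.  Kalmanson
   conditions are invariant under cyclic rotation of the indices and Q(r,s) = Q(s,r), so
   one may take (i, j) = (0, L) with 2L <= m.  Then the sum over k < L of
   Q(0,L) - Q(k,k+1) splits into columns t < m: the columns t >= 2L are nonnegative term
   by term, each column 0 < t < L pairs off with the column L + t, and the columns 0 and
   L cancel exactly against the remaining terms.  So the sum is nonnegative and some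
   k < L works. *)

Definition kalmanson_nat (R : realFieldType) (Z : nat -> nat -> R) (m : nat) :=
  forall a b c d, (a < b)%N -> (b < c)%N -> (c < d)%N -> (d < m)%N ->
    Z a b + Z c d <= Z a c + Z b d /\ Z a d + Z b c <= Z a c + Z b d.

Definition Qnat (R : realFieldType) (Z : nat -> nat -> R) (m r s : nat) : R :=
  (m%:R - 2) * Z r s - \sum_(t < m) Z r t - \sum_(t < m) Z s t.

Lemma QnatC (R : realFieldType) (Z : nat -> nat -> R) m r s :
  (forall x y, Z x y = Z y x) -> Qnat Z m r s = Qnat Z m s r.
Proof. by move=> Zsym; rewrite /Qnat Zsym; ring. Qed.

Lemma sum_adjacent_pairs (R : comPzRingType) (g : nat -> R) (c : R) l :
  \sum_(0 <= k < l.+1) (g k + g k.+1 - c)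
  = g 0%N + g l.+1 + 2 * \sum_(1 <= k < l.+1) g k - c *+ l.+1.
Proof.
have shift : \sum_(0 <= k < l.+1) g k.+1 = \sum_(1 <= k < l.+1) g k + g l.+1.
  by rewrite -big_nat_recr // big_add1.
rewrite sumrB big_split /= sumr_const_nat subn0 shift (@big_ltn _ _ _ 0) //.
ring.
Qed.

Section AdjacentPairs.

Variables (R : realFieldType) (Z : nat -> nat -> R) (m L : nat).
Hypotheses (Z0 : forall x, Z x x = 0) (Zsym : forall x y, Z x y = Z y x).
Hypothesis ZK : kalmanson_nat Z m.

Definition excess t := Z 0 L - Z 0 t - Z L t.

Definition gap k t := excess t + Z k t + Z k.+1 t - Z k k.+1.

Definition gaps t := \sum_(0 <= k < L) gap k t.

Lemma Qnat_sub_adjacent k : Qnat Z m 0 L - Qnat Z m k k.+1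
  = \sum_(t < m) gap k t - 2 * (Z 0 L - Z k k.+1).
Proof.
rewrite /gap /excess !(sumrB, big_split) /= !sumr_const card_ord /Qnat.
by rewrite -[Z 0 L *+ m]mulr_natl -[Z k k.+1 *+ m]mulr_natl; ring.
Qed.

Ltac kal a b c d := let H1 := fresh "K" in let H2 := fresh "K" in
  have [H1 H2] := @ZK a b c d ltac:(lia) ltac:(lia) ltac:(lia) ltac:(lia).

Lemma gap_ge0 k t : (k < L)%N -> (L < t)%N -> (t < m)%N -> 0 <= gap k t.
Proof.
move=> kL Lt tm; rewrite /gap /excess.
case: (posnP k) => [->|k_gt0].
- case: (ltnP 1 L) => L1; first by kal 0%N 1%N L t; lra.
  have eL : L = 1%N by lia.
  by rewrite eL; lra.
- case: (ltnP k.+1 L) => kL'; first by kal 0%N k k.+1 t; kal 0%N k.+1 L t; lra.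
  kal 0%N k L t; have eL : L = k.+1 by lia.
  by rewrite eL in K K0 *; lra.
Qed.

Lemma gap_pair_low_ge0 k t : (k.+2 <= t)%N -> (t < L)%N -> (L + t < m)%N ->
  0 <= gap k t + gap k.+1 (L + t).
Proof.
move=> kt tL Ltm; rewrite /gap /excess; have := Zsym L t.
kal 0%N k.+1 t L; kal 0%N k.+1 L (L + t)%N; kal 0%N k.+2 L (L + t)%N.
case: (ltnP k.+2 t) => [kt'|tk].
- kal 0%N k.+1 k.+2 t; case: (posnP k) => [ek|k_gt0]; first by subst k; lra.
  by kal 0%N k k.+1 t; lra.
- have et : t = k.+2 by lia.
  subst t; case: (posnP k) => [ek|k_gt0]; first by subst k; lra.
  by kal 0%N k k.+1 k.+2; lra.
Qed.

Lemma gap_pair_high_ge0 k t : (0 < t)%N -> (t <= k)%N -> (k.+1 < L)%N ->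
  (L + t < m)%N -> 0 <= gap k.+1 t + gap k (L + t).
Proof.
move=> t_gt0 tk kL Ltm; rewrite /gap /excess.
have := Zsym L t; have := Zsym k.+1 t; have := Zsym k.+2 t.
kal 0%N t k.+1 k.+2; kal 0%N k L (L + t)%N; kal 0%N k.+1 L (L + t)%N.
case: (ltnP t k) => [tk'|kt]; first by kal t k k.+1 L; lra.
have ek : k = t by lia.
by subst k; lra.
Qed.

Lemma gaps_ge0 t : (L < t)%N -> (t < m)%N -> 0 <= gaps t.
Proof.
move=> Lt tm; rewrite /gaps big_nat_cond.
by apply: sumr_ge0 => k /andP[/andP[_ kL] _]; apply: gap_ge0.
Qed.

Lemma gaps_split_low s : (s.+1 < L)%N -> gaps s.+1 =
  \sum_(0 <= k < s) gap k s.+1 + 2 * excess s.+1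
  + \sum_(s.+1 <= k < L.-1) gap k.+1 s.+1.
Proof.
move=> sL; have gap_s : gap s s.+1 = excess s.+1 by rewrite /gap Z0; ring.
have gap_s1 : gap s.+1 s.+1 = excess s.+1 by rewrite /gap Z0 (Zsym s.+2); ring.
rewrite /gaps (@big_cat_nat _ _ _ s) ?(ltnW (ltnW sL)) //=.
rewrite (@big_ltn _ _ _ s) ?(ltnW sL) // (@big_ltn _ _ _ s.+1) // big_add1.
by rewrite gap_s gap_s1 mulr_natl mulr2n !addrA.
Qed.

Lemma gaps_split_high s t : (s.+1 < L)%N -> gaps t =
  gap 0 t + \sum_(0 <= k < s) gap k.+1 t
  + \sum_(s.+1 <= k < L.-1) gap k t + gap L.-1 t.
Proof.
move=> sL; rewrite /gaps -[in LHS](prednK (ltn_trans (ltn0Sn s) sL)).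
rewrite (@big_ltn _ _ _ 0) // big_nat_recr /=; last lia.
rewrite (@big_cat_nat _ _ _ s.+1 1) //=; last lia.
by rewrite big_add1 /= !addrA.
Qed.

Lemma gaps_pair_ge0 t : (0 < t)%N -> (t < L)%N -> (L + t < m)%N ->
  0 <= gaps t - 2 * excess t + gaps (L + t).
Proof.
case: t => [//|s] _ sL Lsm.
rewrite (gaps_split_low sL) (@gaps_split_high s (L + s.+1) sL).
have low : 0 <= \sum_(0 <= k < s) (gap k s.+1 + gap k.+1 (L + s.+1)).
  rewrite big_nat_cond; apply: sumr_ge0 => k /andP[/andP[_ ks] _].
  by apply: gap_pair_low_ge0; lia.
have high : 0 <= \sum_(s.+1 <= k < L.-1) (gap k.+1 s.+1 + gap k (L + s.+1)).
  rewrite big_nat_cond; apply: sumr_ge0 => k /andP[/andP[sk kL] _].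
  by apply: gap_pair_high_ge0; lia.
have end0 : 0 <= gap 0 (L + s.+1) by apply: gap_ge0; lia.
have endL : 0 <= gap L.-1 (L + s.+1) by apply: gap_ge0; lia.
by rewrite big_split /= in low; rewrite big_split /= in high; lra.
Qed.

Lemma gaps_ends : (0 < L)%N ->
  gaps 0 + gaps L - 2 * \sum_(0 <= k < L) (Z 0 L - Z k k.+1)
  + 2 * \sum_(1 <= t < L) excess t = 0.
Proof.
move=> L_gt0.
have -> : gaps 0 + gaps L - 2 * \sum_(0 <= k < L) (Z 0 L - Z k k.+1)
   = \sum_(0 <= k < L) ((Z k 0%N + Z k L) + (Z k.+1 0%N + Z k.+1 L) - 2 * Z 0 L).
  rewrite /gaps mulr_sumr -big_split -sumrB /=; apply: eq_bigr => k _.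
  by rewrite /gap /excess !Z0 (Zsym L 0); ring.
have -> : \sum_(1 <= t < L) excess t
   = \sum_(1 <= t < L) Z 0 L - \sum_(1 <= t < L) (Z t 0%N + Z t L).
  by rewrite -sumrB; apply: eq_bigr => t _; rewrite /excess (Zsym 0 t) (Zsym L t); ring.
rewrite -(prednK L_gt0) sum_adjacent_pairs sumr_const_nat !Z0 (Zsym _ 0) subn1 /=.
by rewrite mulrSr; ring.
Qed.

Lemma sum_Qnat_sub_adjacent_ge0 : (0 < L)%N -> (L + L <= m)%N ->
  0 <= \sum_(0 <= k < L) (Qnat Z m 0 L - Qnat Z m k k.+1).
Proof.
move=> L_gt0 LLm.
under eq_bigr => k _ do rewrite Qnat_sub_adjacent.
rewrite sumrB exchange_big /= -mulr_sumr -(big_mkord xpredT (fun t => gaps t)).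
have columns : \sum_(0 <= t < m) gaps t = gaps 0 + \sum_(1 <= t < L) gaps t + gaps L
    + \sum_(1 <= t < L) gaps (t + L) + \sum_(L + L <= t < m) gaps t.
  rewrite (big_cat_nat (n := L + L)) /=; try lia.
  rewrite (big_cat_nat (n := L.+1) (p := L + L)) /=; try lia.
  by rewrite big_nat_recr //= (big_ltn L_gt0) -{1}(add1n L) big_addn addnK.
have ends := gaps_ends L_gt0.
have pairs : 0 <= \sum_(1 <= t < L) (gaps t - 2 * excess t + gaps (t + L)).
  rewrite big_nat_cond; apply: sumr_ge0 => t /andP[/andP[t1 tL] _].
  by rewrite addnC; apply: gaps_pair_ge0; lia.
have tail : 0 <= \sum_(L + L <= t < m) gaps t.
  rewrite big_nat_cond; apply: sumr_ge0 => t /andP[/andP[Lt tm] _].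
  by apply: gaps_ge0; lia.
rewrite big_split /= sumrB -mulr_sumr in pairs.
by rewrite columns; lra.
Qed.

End AdjacentPairs.

Lemma exists_ge0_of_sum_ge0 (R : realDomainType) (f : nat -> R) L :
  (0 < L)%N -> 0 <= \sum_(0 <= k < L) f k -> exists2 k, (k < L)%N & 0 <= f k.
Proof.
move=> L_gt0 sum_ge0; have [[k /= fk] | none] := pickP (fun k : 'I_L => 0 <= f k).
  by exists k.
have : \sum_(0 <= k < L) f k < \sum_(0 <= k < L) 0.
  apply: ltr_sum_nat => // k /andP[_ kL]; have := none (Ordinal kL).
  by rewrite /= ltNge => ->.
by rewrite big1_eq ltNge sum_ge0.
Qed.

Section Rotation.

Variables (R : realFieldType) (m : nat).

Definition rotate (Z : nat -> nat -> R) c x y := Z ((x + c) %% m)%N ((y + c) %% m)%N.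

Lemma rotateS Z c x y : rotate (rotate Z c) 1 x y = rotate Z c.+1 x y.
Proof. by rewrite /rotate !modnDml -!addnA add1n. Qed.

Lemma rotate1_kalmanson Z : (forall x y, Z x y = Z y x) ->
  kalmanson_nat Z m -> kalmanson_nat (rotate Z 1) m.
Proof.
move=> Zsym ZK a b c d ab bc cd dm.
have small x : (x < m)%N -> (x %% m = x)%N := @modn_small x m.
rewrite /rotate !addn1 (small a.+1) ?(small b.+1) ?(small c.+1); [|lia..].
case: (ltnP d.+1 m) => [dm'|md]; first by rewrite small //; apply: ZK.
have -> : (d.+1 %% m = 0)%N by rewrite (_ : d.+1 = m) ?modnn //; lia.
have [K1 K2] := ZK 0%N a.+1 b.+1 c.+1 isT ab bc ltac:(lia).
by rewrite (Zsym c.+1 0%N) (Zsym b.+1 0%N) (Zsym a.+1 0%N); lra.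
Qed.

Lemma rotate_kalmanson Z c : (forall x y, Z x y = Z y x) ->
  kalmanson_nat Z m -> kalmanson_nat (rotate Z c) m.
Proof.
move=> Zsym ZK; elim: c => [|c IH].
  by move=> a b c d ab bc cd dm; rewrite /rotate !addn0 !modn_small; [exact: ZK | lia..].
have rot_sym x y : rotate Z c x y = rotate Z c y x by rewrite /rotate Zsym.
move=> a b c' d ab bc cd dm; rewrite -!(rotateS Z c).
exact: rotate1_kalmanson.
Qed.

Lemma Qnat_rotate Z c x y : (0 < m)%N ->
  Qnat (rotate Z c) m x y = Qnat Z m ((x + c) %% m) ((y + c) %% m).
Proof.
move=> m_gt0; pose sh (t : 'I_m) : 'I_m := Ordinal (ltn_pmod (t + c) m_gt0).
have sh_inj : injective sh.
  move=> t1 t2 /(congr1 val) /= /eqP; rewrite eqn_modDr !modn_small //.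
  by move=> /eqP/val_inj.
have shift u : \sum_(t < m) Z u ((t + c) %% m)%N = \sum_(t < m) Z u t.
  by rewrite [RHS](reindex_inj sh_inj).
by rewrite /Qnat /rotate !shift.
Qed.

End Rotation.

Section AdjacentComparison.

Variables (R : realFieldType) (Z : nat -> nat -> R) (m : nat).
Hypotheses (Z0 : forall x, Z x x = 0) (Zsym : forall x y, Z x y = Z y x).
Hypothesis ZK : kalmanson_nat Z m.

Lemma Qnat_ge_adjacent_rotated c L : (c < m)%N -> (0 < L)%N -> (L + L <= m)%N ->
  exists2 k, (k < m)%N & 0 <= Qnat Z m c ((L + c) %% m) - Qnat Z m k ((k + 1) %% m).
Proof.
move=> cm L_gt0 LLm; have m_gt0 : (0 < m)%N by lia.
have rot0 x : rotate m Z c x x = 0 by rewrite /rotate Z0.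
have rot_sym x y : rotate m Z c x y = rotate m Z c y x by rewrite /rotate Zsym.
have := sum_Qnat_sub_adjacent_ge0 rot0 rot_sym (rotate_kalmanson c Zsym ZK) L_gt0 LLm.
move=> /(exists_ge0_of_sum_ge0 L_gt0) [k _ k_ge0].
rewrite !Qnat_rotate // add0n (modn_small cm) in k_ge0.
exists ((k + c) %% m)%N; first exact: ltn_pmod.
by rewrite modnDml addn1 -addSn.
Qed.

Lemma Qnat_ge_adjacent i j : (i < j)%N -> (j < m)%N ->
  exists2 k, (k < m)%N & 0 <= Qnat Z m i j - Qnat Z m k ((k + 1) %% m).
Proof.
move=> ij jm; case: (leqP ((j - i) + (j - i)) m) => [short | long].
  have := @Qnat_ge_adjacent_rotated i (j - i) ltac:(lia) ltac:(lia) short.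
  by rewrite subnK ?(ltnW ij) // (modn_small jm).
have := @Qnat_ge_adjacent_rotated j (m - (j - i)) jm ltac:(lia) ltac:(lia).
rewrite (_ : m - (j - i) + j = i + m)%N ?modnDr ?(modn_small (ltn_trans ij jm)); last lia.
by rewrite QnatC.
Qed.

End AdjacentComparison.

Section BlockMeans.

Variables (R : realFieldType) (n m : nat) (pi : {perm 'I_n}) (b : 'I_n -> 'I_m).
Variable mu : 'I_n -> R.
Hypothesis hmu : block_weighting pi b mu.

Definition block_mean r (F : 'I_n -> R) := \sum_(p | b p == r :> nat) mu (pi p) * F p.

Lemma sum_block (F : 'I_n -> R) r :
  \sum_(x in block pi b r) F x = \sum_(p | b p == r :> nat) F (pi p).
Proof.
rewrite /block big_imset /=; last by move=> p q _ _ /perm_inj.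
by apply: eq_bigl => p; rewrite inE.
Qed.

Lemma dblock_mean d r s : dblock d pi b mu r s =
  block_mean r (fun p => block_mean s (fun q => d (pi p) (pi q))).
Proof.
rewrite /dblock sum_block; apply: eq_bigr => p _.
by rewrite sum_block mulr_sumr; apply: eq_bigr => q _; rewrite mulrA.
Qed.

Lemma eq_block_mean r F G : F =1 G -> block_mean r F = block_mean r G.
Proof. by move=> FG; apply: eq_bigr => p _; rewrite FG. Qed.

Lemma block_mean_cst r c : (r < m)%N -> block_mean r (fun=> c) = c.
Proof.
by move=> rm; rewrite /block_mean -mulr_suml -sum_block (hmu.2 (Ordinal rm)) mul1r.
Qed.

Lemma block_meanD r F G :
  block_mean r (fun p => F p + G p) = block_mean r F + block_mean r G.
Proof. by rewrite /block_mean -big_split; apply: eq_bigr => p _; rewrite mulrDr. Qed.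

Lemma block_meanN r F : block_mean r (fun p => - F p) = - block_mean r F.
Proof. by rewrite /block_mean -sumrN; apply: eq_bigr => p _; rewrite mulrN. Qed.

Lemma block_mean_ge0 r F : (forall p, b p = r :> nat -> 0 <= F p) -> 0 <= block_mean r F.
Proof.
move=> F_ge0; apply: sumr_ge0 => p /eqP bp.
by apply: mulr_ge0; [exact: hmu.1 | exact: F_ge0].
Qed.

End BlockMeans.

Section BlockKalmanson.

Variables (R : realFieldType) (n m : nat) (d : 'I_n -> 'I_n -> R) (pi : {perm 'I_n}).
Variables (b : 'I_n -> 'I_m) (mu : 'I_n -> R).
Hypotheses (hK : kalmanson d pi) (hb : consecutive_blocks b).
Hypothesis hmu : block_weighting pi b mu.
Variables a1 a2 a3 a4 : nat.
Hypotheses (a12 : (a1 < a2)%N) (a23 : (a2 < a3)%N) (a34 : (a3 < a4)%N) (a4m : (a4 < m)%N).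

Local Notation mean := (block_mean pi b mu).
Local Notation D p q := (d (pi p) (pi q)).

Definition block_mean4 (f : 'I_n -> 'I_n -> 'I_n -> 'I_n -> R) :=
  mean a1 (fun p => mean a2 (fun q => mean a3 (fun r => mean a4 (fun s => f p q r s)))).

Let a1m : (a1 < m)%N. Proof. lia. Qed.
Let a2m : (a2 < m)%N. Proof. lia. Qed.
Let a3m : (a3 < m)%N. Proof. lia. Qed.

Lemma block_mean4_12 : block_mean4 (fun p q _ _ => D p q) = dblock d pi b mu a1 a2.
Proof.
rewrite /block_mean4 dblock_mean; apply: eq_block_mean => p; apply: eq_block_mean => q.
by rewrite !block_mean_cst.
Qed.

Lemma block_mean4_13 : block_mean4 (fun p _ r _ => D p r) = dblock d pi b mu a1 a3.
Proof.
rewrite /block_mean4 dblock_mean; apply: eq_block_mean => p.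
by under eq_block_mean => q do under eq_block_mean => r do rewrite block_mean_cst //;
  rewrite block_mean_cst.
Qed.

Lemma block_mean4_14 : block_mean4 (fun p _ _ s => D p s) = dblock d pi b mu a1 a4.
Proof.
rewrite /block_mean4 dblock_mean; apply: eq_block_mean => p.
by under eq_block_mean => q do rewrite block_mean_cst //; rewrite block_mean_cst.
Qed.

Lemma block_mean4_23 : block_mean4 (fun _ q r _ => D q r) = dblock d pi b mu a2 a3.
Proof.
rewrite /block_mean4 dblock_mean block_mean_cst //; apply: eq_block_mean => q.
by apply: eq_block_mean => r; rewrite block_mean_cst.
Qed.

Lemma block_mean4_24 : block_mean4 (fun _ q _ s => D q s) = dblock d pi b mu a2 a4.
Proof.
rewrite /block_mean4 dblock_mean block_mean_cst //; apply: eq_block_mean => q.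
by rewrite block_mean_cst.
Qed.

Lemma block_mean4_34 : block_mean4 (fun _ _ r s => D r s) = dblock d pi b mu a3 a4.
Proof. by rewrite /block_mean4 dblock_mean !block_mean_cst. Qed.

Lemma block_mean4D f g :
  block_mean4 (fun p q r s => f p q r s + g p q r s) = block_mean4 f + block_mean4 g.
Proof.
rewrite /block_mean4 -block_meanD; apply: eq_block_mean => p.
rewrite -block_meanD; apply: eq_block_mean => q.
rewrite -block_meanD; apply: eq_block_mean => r.
by rewrite -block_meanD.
Qed.

Lemma block_mean4N f : block_mean4 (fun p q r s => - f p q r s) = - block_mean4 f.
Proof.
rewrite /block_mean4 -block_meanN; apply: eq_block_mean => p.
rewrite -block_meanN; apply: eq_block_mean => q.
rewrite -block_meanN; apply: eq_block_mean => r.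
by rewrite -block_meanN.
Qed.

Lemma block_mean4_ge0 f : (forall p q r s, b p = a1 :> nat -> b q = a2 :> nat ->
    b r = a3 :> nat -> b s = a4 :> nat -> 0 <= f p q r s) ->
  0 <= block_mean4 f.
Proof.
move=> f_ge0; do 4 apply: block_mean_ge0 => // ? ?.
by apply: f_ge0.
Qed.

Lemma dblock_kalmanson :
  dblock d pi b mu a1 a2 + dblock d pi b mu a3 a4
    <= dblock d pi b mu a1 a3 + dblock d pi b mu a2 a4 /\
  dblock d pi b mu a1 a4 + dblock d pi b mu a2 a3
    <= dblock d pi b mu a1 a3 + dblock d pi b mu a2 a4.
Proof.
have pos_lt p q : (b p < b q)%N -> (p < q)%N.
  by move=> bpq; rewrite ltnNge; apply/negP => /hb; lia.
have kal p q r s : b p = a1 :> nat -> b q = a2 :> nat -> b r = a3 :> nat ->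
    b s = a4 :> nat -> D p q + D r s <= D p r + D q s /\ D p s + D q r <= D p r + D q s.
  by move=> bp bq br bs; apply: hK; apply: pos_lt; lia.
split.
- suff : 0 <= block_mean4 (fun p q r s => D p r + D q s + - D p q + - D r s).
    rewrite !block_mean4D !block_mean4N block_mean4_13 block_mean4_24.
    by rewrite block_mean4_12 block_mean4_34; lra.
  by apply: block_mean4_ge0 => p q r s bp bq br bs; have [] := kal p q r s bp bq br bs; lra.
- suff : 0 <= block_mean4 (fun p q r s => D p r + D q s + - D p s + - D q r).
    rewrite !block_mean4D !block_mean4N block_mean4_13 block_mean4_24.
    by rewrite block_mean4_14 block_mean4_23; lra.
  by apply: block_mean4_ge0 => p q r s bp bq br bs; have [] := kal p q r s bp bq br bs; lra.
Qed.

End BlockKalmanson.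

Lemma dblockC (R : realFieldType) n m (d : 'I_n -> 'I_n -> R) (pi : {perm 'I_n})
    (b : 'I_n -> 'I_m) (mu : 'I_n -> R) r s :
  (forall x y, d x y = d y x) -> dblock d pi b mu r s = dblock d pi b mu s r.
Proof.
move=> dsym; rewrite /dblock exchange_big; apply: eq_bigr => y _; apply: eq_bigr => x _.
by rewrite dsym mulrAC mulrC mulrA.
Qed.

Section BlockDistances.

Variables (R : realFieldType) (n m : nat) (d : 'I_n -> 'I_n -> R) (pi : {perm 'I_n}).
Variables (b : 'I_n -> 'I_m) (mu : 'I_n -> R).

Definition block_dist r s := if r == s then 0 else dblock d pi b mu r s.

Lemma block_dist0 r : block_dist r r = 0.
Proof. by rewrite /block_dist eqxx. Qed.

Lemma block_distC : dissimilarity d -> forall r s, block_dist r s = block_dist s r.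
Proof.
move=> hd r s; rewrite /block_dist eq_sym.
by case: eqP => // _; apply: dblockC hd.1.
Qed.

Lemma block_dist_kalmanson : kalmanson d pi -> consecutive_blocks b ->
  block_weighting pi b mu -> kalmanson_nat block_dist m.
Proof.
move=> hK hb hmu a1 a2 a3 a4 a12 a23 a34 a4m.
by rewrite /block_dist !ifN_eq; [exact: dblock_kalmanson | apply/eqP; lia..].
Qed.

Lemma Qd_block_dist r s : r != s -> Qd d pi b mu r s = Qnat block_dist m r s.
Proof.
have sum_off u : \sum_(t < m | (t : nat) != u) dblock d pi b mu u t
    = \sum_(t < m) block_dist u t.
  by rewrite big_mkcond; apply: eq_bigr => t _; rewrite /block_dist eq_sym; case: eqP.
by move=> rs; rewrite /Qd /Qnat !sum_off /block_dist (negbTE rs).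
Qed.

End BlockDistances.

Lemma neq_succ_mod k m : (1 < m)%N -> (k < m)%N -> k != ((k + 1) %% m)%N.
Proof.
move=> m_gt1 km; apply/eqP; case: (ltnP (k + 1) m) => [k1m | mk1].
  by rewrite modn_small //; lia.
by rewrite (_ : k + 1 = m)%N ?modnn; lia.
Qed.

Theorem mainTheorem10 (R : realFieldType) (n m : nat)
  (d : 'I_n -> 'I_n -> R) (pi : {perm 'I_n}) (b : 'I_n -> 'I_m) (mu : 'I_n -> R)
  (hd : dissimilarity d) (hK : kalmanson d pi)
  (hb : consecutive_blocks b) (hmu : block_weighting pi b mu)
  (i j : nat) (hij : (i + 3 < j)%N) (hj : (j < m)%N) :
  exists k : 'I_m, 0 <= Qd d pi b mu i j - Qd d pi b mu k ((k + 1) %% m)%N.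
Proof.
have [k km k_ge0] : exists2 k, (k < m)%N &
    0 <= Qnat (block_dist d pi b mu) m i j
         - Qnat (block_dist d pi b mu) m k ((k + 1) %% m).
  apply: Qnat_ge_adjacent; [exact: block_dist0 | exact: block_distC | | lia | done].
  exact: block_dist_kalmanson.
exists (Ordinal km).
have ij : i != j by apply/eqP; lia.
have k_succ : k != ((k + 1) %% m)%N by apply: neq_succ_mod; lia.
by rewrite !Qd_block_dist.
Qed.
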